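(* Let $G=(V,E,w)$ be a weighted graph with no isolated vertices, let $s\in[0,1]^V$, let $k\in\mathbb{N}$, and let $\alpha,\beta\ge 0$ be constants, not both zero. Consider the objective $F(s') := \alpha\, D(z') + \beta\, P(z')$ where $z'=(I+L)^{-1}s'$. Let $s'$ be a maximizer of $F$ over the feasible set $\{s'\in[0,1]^V : \|s'-s\|_0\le k\}$. Then for every $v\in V$, if $s'_v\neq s_v$ then $s'_v\in\{0,1\}$. (In particular this applies to maximizing disagreement alone, polarization alone, or $P+\lambda\frac{n}{m}D$ for $\lambda\ge 0$.)
   Context: $G=(V,E,w)$ is a weighted undirected graph on $n=|V|$ vertices with $m=|E|$ edges, with weights $w_{u,v}\in(0,1]$ for $(u,v)\in E$ and $w_{u,v}=0$ otherwise (and $w_{v,v}=0$). $L=\mathrm{Diag}(d)-A$ is the weighted Laplacian, where $A_{u,v}=w_{u,v}$ and $d_v=\sum_u w_{v,u}$. Given innate opinions $s\in[0,1]^V$, the (Friedkin–Johnsen) equilibrium opinions are $z=(I+L)^{-1}s$. Disagreement is $D(z)=\sum_{(u,v)\in E} w_{u,v}(z_u-z_v)^2$ and polarization is $P(z)=\sum_{v\in V}(z_v-\bar z)^2$ with $\bar z=\frac1n\sum_v z_v$. $\|x\|_0$ denotes the number of nonzero coordinates of $x$. *)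

From HB Require Import structures.
From mathcomp Require Import all_boot all_order all_algebra.
Set Implicit Arguments. Unset Strict Implicit. Unset Printing Implicit Defensive.
Import Order.TTheory GRing.Theory Num.Theory.
Local Open Scope ring_scope.

Definition degree (R : realFieldType) (n : nat) (A : 'M[R]_n) (v : 'I_n) : R :=
  \sum_(u < n) A v u.

Definition laplacian (R : realFieldType) (n : nat) (A : 'M[R]_n) : 'M[R]_n :=
  \matrix_(i, j) ((i == j)%:R * degree A i) - A.

Definition equilibrium (R : realFieldType) (n : nat) (A : 'M[R]_n) (s : 'cV[R]_n)
  : 'cV[R]_n := invmx (1%:M + laplacian A) *m s.

(* D(z) = sum over edges {u,v} (each unordered pair once) w_{u,v} (z_u - z_v)^2;
   non-edges have weight 0 so summing over all pairs u < v is the same. *)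
Definition disagreement (R : realFieldType) (n : nat) (A : 'M[R]_n) (z : 'cV[R]_n)
  : R := \sum_(u < n) \sum_(v < n | (u < v)%N) A u v * (z u 0 - z v 0) ^+ 2.

Definition polarization (R : realFieldType) (n : nat) (z : 'cV[R]_n) : R :=
  \sum_(v < n) (z v 0 - (\sum_(u < n) z u 0) / n%:R) ^+ 2.

Definition objective (R : realFieldType) (n : nat) (A : 'M[R]_n) (alpha beta : R)
  (s' : 'cV[R]_n) : R :=
  alpha * disagreement A (equilibrium A s') + beta * polarization (equilibrium A s').

Definition l0dist (R : realFieldType) (n : nat) (s s' : 'cV[R]_n) : nat :=
  #|[set v : 'I_n | s' v 0 != s v 0]|.

Definition in01 (R : realFieldType) (n : nat) (s : 'cV[R]_n) : Prop :=
  forall v : 'I_n, 0 <= s v 0 <= 1.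

Definition feasible (R : realFieldType) (n : nat) (s : 'cV[R]_n) (k : nat)
  (s' : 'cV[R]_n) : Prop := in01 s' /\ (l0dist s s' <= k)%N.

(* weighted undirected graph: symmetric, zero diagonal, weights in [0,1]
   (edges are exactly the pairs with positive weight, which then lie in (0,1]) *)
Definition weighted_graph (R : realFieldType) (n : nat) (A : 'M[R]_n) : Prop :=
  (forall u v, A u v = A v u) /\ (forall v, A v v = 0) /\
  (forall u v, 0 <= A u v <= 1).

Definition no_isolated (R : realFieldType) (n : nat) (A : 'M[R]_n) : Prop :=
  forall v : 'I_n, exists u : 'I_n, 0 < A v u.

(* Disagreement and polarization are quadratic forms and s' |-> z' is linear,
   so F obeys the parallelogram law
   F(s' + t e) + F(s' - t e) = 2 F(s') + 2 t^2 F(e).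
   For e = e_v, the response x = (I + L)^-1 e_v jumps across some edge: were it
   constant across all edges, L x = 0 and so x = e_v, which jumps across any
   edge at v.  Hence F(e_v) > 0, and if s'_v was changed and lies strictly
   inside (0, 1), one of s' +- t e_v is feasible with a larger objective. *)

From HB Require Import structures.
From mathcomp Require Import all_boot all_order all_algebra.
From mathcomp Require Import ring lra.
Import Order.TTheory GRing.Theory Num.Theory.
Local Open Scope ring_scope.

Section Graph.
Context {R : realFieldType} {n : nat} {A : 'M[R]_n}.

Lemma mulmx_laplacian_col (x : 'cV[R]_n) i :
  (laplacian A *m x) i 0 = \sum_j A i j * (x i 0 - x j 0).
Proof.
rewrite mxE; under eq_bigr do rewrite !mxE mulrBl.
rewrite sumrB (bigD1 i) //= big1 => [|j /negbTE ji]; last first.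
  by rewrite eq_sym ji !mul0r.
rewrite eqxx mul1r addr0 /degree big_distrl /= -sumrB.
by apply: eq_bigr => j _; rewrite mulrBr.
Qed.

Lemma mulmx_1_laplacian_col (x : 'cV[R]_n) i :
  ((1%:M + laplacian A) *m x) i 0 = x i 0 + \sum_j A i j * (x i 0 - x j 0).
Proof. by rewrite mulmxDl mul1mx mxE mulmx_laplacian_col. Qed.

Hypothesis A_ge0 : forall u v, 0 <= A u v.

(* Maximum principle: at a maximal coordinate every term of L y is >= 0. *)
Lemma ker_1_laplacian_le0 (y : 'cV[R]_n) :
  (1%:M + laplacian A) *m y = 0 -> forall j, y j 0 <= 0.
Proof.
move=> Ly0 j; have [i _ ymax] := @arg_maxP _ _ _ j predT (fun i => y i 0) isT.
have := congr1 (fun M : 'cV[R]_n => M i 0) Ly0.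
rewrite /= mulmx_1_laplacian_col mxE => yi.
have : 0 <= \sum_l A i l * (y i 0 - y l 0).
  by apply: sumr_ge0 => l _; rewrite mulr_ge0 // subr_ge0; apply: ymax.
by have : y j 0 <= y i 0 := ymax j isT; lra.
Qed.

Lemma unitmx_1_laplacian : (1%:M + laplacian A) \in unitmx.
Proof.
rewrite unitmxE unitfE -det_tr; apply/negP => /det0P [u u_neq0 uM0].
have My0 : (1%:M + laplacian A) *m u^T = 0.
  by rewrite -[1%:M + _]trmxK -trmx_mul uM0 trmx0.
have My'0 : (1%:M + laplacian A) *m - u^T = 0 by rewrite mulmxN My0 oppr0.
move/eqP: u_neq0; apply; apply/matrixP => i j; rewrite [i]ord1 !mxE.
have := ker_1_laplacian_le0 _ My0 j; have := ker_1_laplacian_le0 _ My'0 j.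
rewrite !mxE; lra.
Qed.

Hypothesis A_sym : forall u v, A u v = A v u.

Lemma disagreement_gt0 (x : 'cV[R]_n) u w :
  0 < A u w -> x u 0 != x w 0 -> 0 < disagreement A x.
Proof.
wlog uw : u w / (u < w)%N => [hwlog Auw xuw|].
  have [/hwlog|/hwlog|/val_inj uw] := ltngtP u w.
  - exact.
  - by rewrite A_sym eq_sym; apply.
  - by rewrite uw eqxx in xuw.
move=> Auw xuw; rewrite /disagreement (bigD1 u) //= (bigD1 w) //=.
have term_gt0 : 0 < A u w * (x u 0 - x w 0) ^+ 2.
  by rewrite mulr_gt0 // exprn_even_gt0 //= subr_eq0.
have term_ge0 u' w' : 0 <= A u' w' * (x u' 0 - x w' 0) ^+ 2.
  by rewrite mulr_ge0 ?sqr_ge0.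
have : 0 <= \sum_(w' < n | (u < w')%N && (w' != w)) A u w' * (x u 0 - x w' 0) ^+ 2.
  by apply: sumr_ge0.
have : 0 <= \sum_(u' < n | u' != u) \sum_(w' < n | (u' < w')%N)
                A u' w' * (x u' 0 - x w' 0) ^+ 2.
  by apply: sumr_ge0 => u' _; apply: sumr_ge0.
lra.
Qed.

Hypothesis A_diag0 : forall v, A v v = 0.

Lemma equilibrium_delta_jump (v : 'I_n) :
  (exists u, 0 < A v u) ->
  exists u w, 0 < A u w /\
    equilibrium A (delta_mx v 0) u 0 != equilibrium A (delta_mx v 0) w 0.
Proof.
case=> u Avu; have vu : u != v by apply: contraTneq Avu => ->; rewrite A_diag0 ltxx.
set x := equilibrium A _.
have [/existsP [u' /existsP [w /andP [Aw xw]]]|] :=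
  boolP [exists u, exists w, (0 < A u w) && (x u 0 != x w 0)].
  by exists u', w.
rewrite negb_exists => /forallP no_jump; exfalso.
have Mx : (1%:M + laplacian A) *m x = delta_mx v 0.
  by rewrite /x /equilibrium mulmxA mulmxV ?mul1mx // unitmx_1_laplacian.
have xE i : x i 0 = delta_mx v 0 i (0 : 'I_1).
  rewrite -Mx mulmx_1_laplacian_col big1 ?addr0 // => j _.
  have := no_jump i; rewrite negb_exists => /forallP /(_ j).
  rewrite negb_and negbK lt_def A_ge0 andbT negbK.
  by case/orP=> [/eqP -> | /eqP ->]; rewrite ?mul0r ?subrr ?mulr0.
have := no_jump v; rewrite negb_exists => /forallP /(_ u).
by rewrite Avu /= negbK !xE !mxE eqxx (negbTE vu) /= pnatr_eq0.
Qed.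

End Graph.

Lemma polarization_gt0 {R : realFieldType} {n : nat} (x : 'cV[R]_n) u w :
  x u 0 != x w 0 -> 0 < polarization x.
Proof.
move=> xuw; set m := (\sum_(i < n) x i 0) / n%:R.
have term_ge0 (i : 'I_n) : 0 <= (x i 0 - m) ^+ 2 by apply: sqr_ge0.
rewrite lt_def sumr_ge0 // andbT; apply: contraNneq xuw => P0.
have at_mean i : x i 0 = m.
  by apply/eqP; rewrite -subr_eq0 -sqrf_eq0; apply/eqP/(psumr_eq0P _ P0).
by rewrite !at_mean.
Qed.

Section Parallelogram.
Context {R : realFieldType} {n : nat}.
Implicit Types (z x : 'cV[R]_n) (t : R).

Lemma disagreement_parallelogram (A : 'M[R]_n) z x t :
  disagreement A (z + t *: x) + disagreement A (z - t *: x) =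
  2 * disagreement A z + 2 * t ^+ 2 * disagreement A x.
Proof.
rewrite /disagreement -big_split !mulr_sumr -big_split; apply: eq_bigr => u _.
rewrite -big_split !mulr_sumr -big_split; apply: eq_bigr => w _.
rewrite /= !mxE; ring.
Qed.

Lemma polarization_parallelogram z x t :
  polarization (z + t *: x) + polarization (z - t *: x) =
  2 * polarization z + 2 * t ^+ 2 * polarization x.
Proof.
have sum_shift t' : \sum_(u < n) (z + t' *: x) u 0 =
                   \sum_(u < n) z u 0 + t' * \sum_(u < n) x u 0.
  by rewrite mulr_sumr -big_split; apply: eq_bigr => u _; rewrite !mxE.
rewrite /polarization -scaleNr !sum_shift.
set Sz := \sum_(u < n) z u 0; set Sx := \sum_(u < n) x u 0; clearbody Sz Sx.
rewrite -big_split !mulr_sumr -big_split; apply: eq_bigr => u _.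
rewrite /= !mxE; ring.
Qed.

Lemma equilibrium_add_scale (A : 'M[R]_n) z x t :
  equilibrium A (z + t *: x) = equilibrium A z + t *: equilibrium A x.
Proof. by rewrite /equilibrium mulmxDr scalemxAr. Qed.

Lemma objective_parallelogram (A : 'M[R]_n) (alpha beta : R) z x t :
  objective A alpha beta (z + t *: x) + objective A alpha beta (z - t *: x) =
  2 * objective A alpha beta z + 2 * t ^+ 2 * objective A alpha beta x.
Proof.
rewrite /objective -scaleNr !equilibrium_add_scale scaleNr.
have := disagreement_parallelogram A (equilibrium A z) (equilibrium A x) t.
have := polarization_parallelogram (equilibrium A z) (equilibrium A x) t.
set D1 := disagreement A (_ + _); set D2 := disagreement A (_ - _).
set P1 := polarization (_ + _); set P2 := polarization (_ - _).
move=> P12 D12.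
transitivity (alpha * (D1 + D2) + beta * (P1 + P2)); first ring.
by rewrite D12 P12; ring.
Qed.

End Parallelogram.

Lemma objective_delta_gt0 {R : realFieldType} {n : nat} {A : 'M[R]_n}
    {alpha beta : R} (v : 'I_n) :
  weighted_graph A -> no_isolated A ->
  0 <= alpha -> 0 <= beta -> alpha != 0 \/ beta != 0 ->
  0 < objective A alpha beta (delta_mx v 0).
Proof.
move=> [A_sym [A_diag0 A_01]] A_iso alpha_ge0 beta_ge0 alpha_beta_neq0.
have A_ge0 u w : 0 <= A u w by case/andP: (A_01 u w).
have [u [w [Auw xuw]]] := equilibrium_delta_jump A_ge0 A_diag0 v (A_iso v).
have D_gt0 := disagreement_gt0 A_ge0 A_sym _ _ _ Auw xuw.
have P_gt0 := polarization_gt0 _ _ _ xuw.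
rewrite /objective; set D := disagreement _ _ in D_gt0 *.
set P := polarization _ in P_gt0 *.
have aD_ge0 : 0 <= alpha * D by rewrite mulr_ge0 // ltW.
have bP_ge0 : 0 <= beta * P by rewrite mulr_ge0 // ltW.
case: alpha_beta_neq0 => [alpha_neq0|beta_neq0].
- have : 0 < alpha * D by rewrite mulr_gt0 // lt_def alpha_neq0.
  lra.
- have : 0 < beta * P by rewrite mulr_gt0 // lt_def beta_neq0.
  lra.
Qed.

Lemma feasible_shift {R : realFieldType} {n : nat} {s s' : 'cV[R]_n} {k : nat}
    {v : 'I_n} (t : R) :
  feasible s k s' -> s' v 0 != s v 0 -> 0 <= s' v 0 + t <= 1 ->
  feasible s k (s' + t *: delta_mx v 0).
Proof.
move=> [s'_01 s'_near] s'v_moved s'vt_01; split.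
  move=> w; rewrite !mxE; have [->|_] := eqVneq w v.
    by rewrite eqxx mulr1.
  by rewrite mulr0 addr0; apply: s'_01.
apply: leq_trans s'_near; apply: subset_leq_card; apply/subsetP => w.
rewrite !inE !mxE; have [->|_] := eqVneq w v; first by rewrite s'v_moved.
by rewrite mulr0 addr0.
Qed.

Theorem theorem1p1 (R : realFieldType) (n : nat) (A : 'M[R]_n)
  (hG : weighted_graph A) (hiso : no_isolated A)
  (s : 'cV[R]_n) (hs : in01 s) (k : nat) (alpha beta : R)
  (halpha : 0 <= alpha) (hbeta : 0 <= beta) (hab : alpha != 0 \/ beta != 0)
  (s' : 'cV[R]_n) (hfeas : feasible s k s')
  (hmax : forall s'' : 'cV[R]_n, feasible s k s'' ->
            objective A alpha beta s'' <= objective A alpha beta s') :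
  forall v : 'I_n, s' v 0 != s v 0 -> s' v 0 = 0 \/ s' v 0 = 1.
Proof.
move=> v s'v_moved.
have [->|s'v_neq0] := eqVneq (s' v 0) 0; first by left.
have [->|s'v_neq1] := eqVneq (s' v 0) 1; first by right.
exfalso; have /andP [s'v_ge0 s'v_le1] := hfeas.1 v.
set d := Num.min (s' v 0) (1 - s' v 0).
have d_gt0 : 0 < d by rewrite lt_min lt_def s'v_neq0 s'v_ge0 subr_gt0 lt_neqAle s'v_neq1.
have d_le : d <= s' v 0 /\ d <= 1 - s' v 0 by split; rewrite ge_min lexx ?orbT.
have F_plus := hmax _ (feasible_shift d hfeas s'v_moved ltac:(apply/andP; lra)).
have F_minus := hmax _ (feasible_shift (- d) hfeas s'v_moved ltac:(apply/andP; lra)).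
have Fe_gt0 := objective_delta_gt0 v hG hiso halpha hbeta hab.
have := objective_parallelogram A alpha beta s' (delta_mx v 0) d.
rewrite -scaleNr.
have : 0 < d ^+ 2 * objective A alpha beta (delta_mx v 0) by rewrite mulr_gt0 ?exprn_gt0.
rewrite -mulrA; lra.
Qed.
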